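(* Consider a population model with two biallelic causal variants (alleles $A_1,A_2$ and $B_1,B_2$) and a biallelic marker (alleles $M_1,M_2$), with ordered genotypes, in which the marker is in linkage disequilibrium with the first causal variant and in linkage equilibrium with the second causal variant, and Hardy–Weinberg equilibrium holds. Let $\pi\in(0,1)$ be the probability that a random individual is a case and $\pi_{kl}$ the probability of being a case given ordered genotype $(A_k,A_l)$ at the first causal variant, with $\pi_{12}=\pi_{21}$. Then \[ \frac{q_1^U-q_1^A}{\sqrt{q_1q_2}} \;=\; \Delta\,\frac{p_1^U-p_1^A}{\sqrt{p_1p_2}}, \qquad \Delta:=\frac{D_{11}}{\sqrt{p_1p_2q_1q_2}},\quad D_{11}=\mathrm{P}(A_1M_1)-p_1q_1 . \]
   Context: A random individual is drawn from a population. Each individual carries two ordered haplotypes, and at each of three loci (first causal variant with alleles $A_1,A_2$; second causal variant with alleles $B_1,B_2$; marker with alleles $M_1,M_2$) has an ordered genotype. The individual is a case (event $A$) or a control (event $U$). $p_i\in(0,1)$, $q_k\in(0,1)$ are the population frequencies of alleles $A_i$ and $M_k$ ($p_2=1-p_1$, $q_2=1-q_1$), and $\mathrm{P}(A_1M_1)$ the population frequency of haplotype $(A_1,M_1)$. $q_1^A,q_1^U$ are the frequencies of allele $M_1$ among cases and among controls, and $p_1^A,p_1^U$ the frequencies of allele $A_1$ among cases and among controls (allele frequency among a group $=$ probability of homozygous genotype plus half the probabilities of the two ordered heterozygous genotypes, within that group). The marker is not causal: given the genotypes at the two causal variants, case/control status is independent of the marker genotype. Linkage equilibrium of the marker with the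 second causal variant means that, given the genotype at the first causal variant, the marker genotype is independent of the genotype at the second causal variant. Hardy–Weinberg equilibrium means the two haplotypes of an individual are independent. *)

From HB Require Import structures.
From mathcomp Require Import all_boot all_order all_algebra.
Set Implicit Arguments. Unset Strict Implicit. Unset Printing Implicit Defensive.
Import Order.TTheory GRing.Theory Num.Theory.
Local Open Scope ring_scope.

(* Alleles at a biallelic locus: ord0 stands for allele 1 (A_1, B_1, M_1),
   the other element of 'I_2 for allele 2. *)
Definition allele := 'I_2.
Definition al1 : allele := ord0.
Definition al2 : allele := ord_max.

Definition hap := (allele * allele * allele)%type.
Definition alA (h : hap) : allele := h.1.1.
Definition alB (h : hap) : allele := h.1.2.
Definition alM (h : hap) : allele := h.2.

Definition indiv := (hap * hap * bool)%type.
Definition hap1 (w : indiv) : hap := w.1.1.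
Definition hap2 (w : indiv) : hap := w.1.2.
Definition isCase (w : indiv) : bool := w.2.

Definition gA (w : indiv) : allele * allele := (alA (hap1 w), alA (hap2 w)).
Definition gB (w : indiv) : allele * allele := (alB (hap1 w), alB (hap2 w)).
Definition gM (w : indiv) : allele * allele := (alM (hap1 w), alM (hap2 w)).

Definition is_distr (R : numDomainType) (P : {ffun indiv -> R}) : Prop :=
  (forall w, 0 <= P w) /\ \sum_w P w = 1.

Definition Pr (R : numDomainType) (P : {ffun indiv -> R}) (E : pred indiv) : R :=
  \sum_(w | E w) P w.

Definition allele_freq_in (R : numFieldType) (P : {ffun indiv -> R})
    (E : pred indiv) (loc : hap -> allele) (a : allele) : R :=
  (Pr P (fun w => E w && (loc (hap1 w) == a) && (loc (hap2 w) == a))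
   + (Pr P (fun w => E w && (loc (hap1 w) == a) && (loc (hap2 w) != a))
      + Pr P (fun w => E w && (loc (hap1 w) != a) && (loc (hap2 w) == a))) / 2)
  / Pr P E.

(* Population haplotype frequency of (A = a, M = m): average of the
   frequencies on the two haplotype positions (which coincide under the
   identical-distribution hypothesis of the theorem). *)
Definition hapAM_freq (R : numFieldType) (P : {ffun indiv -> R})
    (a m : allele) : R :=
  (Pr P (fun w => (alA (hap1 w) == a) && (alM (hap1 w) == m))
   + Pr P (fun w => (alA (hap2 w) == a) && (alM (hap2 w) == m))) / 2.

Definition pi_geno (R : numFieldType) (P : {ffun indiv -> R}) (k l : allele) : R :=
  Pr P (fun w => isCase w && (gA w == (k, l))) / Pr P (fun w => gA w == (k, l)).

(* Non-causality of the marker and its linkage equilibrium with the second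
   causal variant combine, by the contraction property of conditional
   independence, into: case status and marker genotype are independent given
   the genotype at the first causal variant.  Under Hardy-Weinberg equilibrium
   this descends to single haplotypes, so in every status group a haplotype
   carrying A_a carries M_1 with the population probability
   r_a = P(A_a M_1) / p_a.  Hence in every group the M_1 frequency is
   r_2 + (r_1 - r_2) times the A_1 frequency, and r_1 - r_2 = D_11 / (p_1 p_2);
   subtracting the case and control instances gives the identity. *)

From HB Require Import structures.
From mathcomp Require Import all_boot all_order all_algebra.
From mathcomp Require Import ring lra.
Import Order.TTheory GRing.Theory Num.Theory.
Set Implicit Arguments. Unset Strict Implicit. Unset Printing Implicit Defensive.
Local Open Scope ring_scope.

Lemma sum_allele (V : nmodType) (f : allele -> V) : \sum_a f a = f al1 + f al2.
Proof. by rewrite big_ord_recl big_ord1; congr (f _ + f _); apply: val_inj. Qed.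

Lemma allele_cases (a : allele) : a = al1 \/ a = al2.
Proof. by case: a => [[|[|//]] ?]; [left | right]; apply: val_inj. Qed.

Definition hap_at (i : bool) (w : indiv) : hap := if i then hap1 w else hap2 w.
Definition geno_at (i : bool) (g : allele * allele) : allele := if i then g.1 else g.2.

Lemma gA_at (i : bool) (w : indiv) : alA (hap_at i w) = geno_at i (gA w).
Proof. by case: i. Qed.

Lemma gM_at (i : bool) (w : indiv) : alM (hap_at i w) = geno_at i (gM w).
Proof. by case: i. Qed.

Lemma gA_eq_at (i : bool) (w : indiv) (ga : allele * allele) :
  (gA w == ga)
  = (alA (hap_at i w) == geno_at i ga) && (alA (hap_at (~~ i) w) == geno_at (~~ i) ga).
Proof. by case: i; case: ga => a a'; rewrite /gA xpair_eqE // andbC. Qed.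

Section Events.
Variables (R : numDomainType) (P : {ffun indiv -> R}).

Lemma eq_Pr (E F : pred indiv) : E =1 F -> Pr P E = Pr P F.
Proof. exact: eq_bigl. Qed.

Lemma PrID (E C : pred indiv) :
  Pr P E = Pr P (fun w => E w && C w) + Pr P (fun w => E w && ~~ C w).
Proof. exact: bigID. Qed.

Lemma Pr_partition (T : finType) (g : indiv -> T) (E : pred indiv) (S : pred T) :
  Pr P (fun w => E w && S (g w)) = \sum_(x | S x) Pr P (fun w => E w && (g w == x)).
Proof.
rewrite /Pr (partition_big g S) => [|w /andP[]//].
apply: eq_bigr => x Sx; apply: eq_bigl => w.
by case: eqP => [->|]; rewrite ?Sx ?andbT ?andbF.
Qed.

Lemma Pr_sum (T : finType) (g : indiv -> T) (E : pred indiv) :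
  Pr P E = \sum_x Pr P (fun w => E w && (g w == x)).
Proof. by rewrite -(Pr_partition g E predT); apply: eq_Pr => w; rewrite andbT. Qed.

Lemma Pr_partitionT (T : finType) (g : indiv -> T) (S : pred T) :
  Pr P (fun w => S (g w)) = \sum_(x | S x) Pr P (fun w => g w == x).
Proof. exact: (Pr_partition g predT). Qed.

Lemma Pr_predC (E : pred indiv) : Pr P predT = 1 -> Pr P (predC E) = 1 - Pr P E.
Proof. by move=> P1; rewrite -P1 (PrID predT E) addrAC subrr add0r. Qed.

Hypothesis P_ge0 : forall w, 0 <= P w.

Lemma Pr_ge0 (E : pred indiv) : 0 <= Pr P E.
Proof. exact: sumr_ge0. Qed.

Lemma le_Pr (E F : pred indiv) : (forall w, E w -> F w) -> Pr P E <= Pr P F.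
Proof.
move=> EF; rewrite /Pr [leRHS](bigID E) /= (eq_bigl E) ?lerDl ?sumr_ge0 //.
by move=> w; case Ew: (E w); rewrite ?andbT ?andbF ?EF.
Qed.

Lemma Pr_eq0_sub (E F : pred indiv) :
  (forall w, E w -> F w) -> Pr P F = 0 -> Pr P E = 0.
Proof. by move=> EF F0; apply/eqP; rewrite eq_le Pr_ge0 -F0 le_Pr. Qed.

Lemma Pr_cond_indep_contraction (TA TB TM : finType) (X : pred indiv)
    (A : indiv -> TA) (B : indiv -> TB) (M : indiv -> TM) :
  (forall a b m,
     Pr P (fun w => X w && (A w == a) && (B w == b) && (M w == m))
       * Pr P (fun w => (A w == a) && (B w == b))
     = Pr P (fun w => X w && (A w == a) && (B w == b))
       * Pr P (fun w => (A w == a) && (B w == b) && (M w == m))) ->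
  (forall a b m,
     Pr P (fun w => (A w == a) && (B w == b) && (M w == m)) * Pr P (fun w => A w == a)
     = Pr P (fun w => (A w == a) && (B w == b)) * Pr P (fun w => (A w == a) && (M w == m))) ->
  forall a m,
    Pr P (fun w => X w && (A w == a) && (M w == m)) * Pr P (fun w => A w == a)
    = Pr P (fun w => X w && (A w == a)) * Pr P (fun w => (A w == a) && (M w == m)).
Proof.
move=> XM_AB MB_A a m.
rewrite (Pr_sum B (fun w => X w && _ && _)) (Pr_sum B (fun w => X w && _)).
rewrite !mulr_suml; apply: eq_bigr => b _.
rewrite (eq_Pr (F := fun w => X w && (A w == a) && (B w == b) && (M w == m)));
  last by move=> w; rewrite andbAC.
have [AB0|ABn0] := eqVneq (Pr P (fun w => (A w == a) && (B w == b))) 0.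
  have XAB0 : Pr P (fun w => X w && (A w == a) && (B w == b)) = 0.
    by apply: Pr_eq0_sub AB0 => w /andP[/andP[_ ->] ->].
  by rewrite XAB0 (Pr_eq0_sub _ XAB0) ?mul0r // => w /andP[].
apply: (mulIf ABn0); rewrite mulrAC XM_AB -mulrA MB_A; ring.
Qed.

End Events.

Section GroupFrequencies.
Variables (R : numFieldType) (P : {ffun indiv -> R}).

Lemma allele_freq_inE (E : pred indiv) (loc : hap -> allele) (a : allele) :
  allele_freq_in P E loc a =
  (Pr P (fun w => E w && (loc (hap1 w) == a)) + Pr P (fun w => E w && (loc (hap2 w) == a)))
    / 2 / Pr P E.
Proof.
rewrite /allele_freq_in.
rewrite [Pr P (fun w => E w && (loc (hap1 w) == a))](PrID P _ (fun w => loc (hap2 w) == a)).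
rewrite [Pr P (fun w => E w && (loc (hap2 w) == a))](PrID P _ (fun w => loc (hap1 w) == a)).
rewrite (eq_Pr P (E := fun w => E w && _ && (loc (hap1 w) == a))
               (F := fun w => E w && (loc (hap1 w) == a) && (loc (hap2 w) == a)));
  last by move=> w; rewrite andbAC.
rewrite (eq_Pr P (E := fun w => E w && _ && ~~ (loc (hap1 w) == a))
               (F := fun w => E w && (loc (hap1 w) != a) && (loc (hap2 w) == a)));
  last by move=> w; rewrite andbAC.
by congr (_ / _); field.
Qed.

Lemma eq_allele_freq_in (E F : pred indiv) (loc : hap -> allele) (a : allele) :
  E =1 F -> allele_freq_in P E loc a = allele_freq_in P F loc a.
Proof.
move=> eEF; rewrite !allele_freq_inE (eq_Pr P eEF).
by congr ((_ + _) / 2 / _); apply: eq_Pr => w; rewrite eEF.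
Qed.

Lemma allele_freq_linear (X : pred indiv) (r : allele -> R) :
  (forall i a,
     Pr P (fun w => X w && (alA (hap_at i w) == a) && (alM (hap_at i w) == al1))
     = Pr P (fun w => X w && (alA (hap_at i w) == a)) * r a) ->
  Pr P X != 0 ->
  allele_freq_in P X alM al1 = r al2 + (r al1 - r al2) * allele_freq_in P X alA al1.
Proof.
move=> XM_A X_neq0.
have M1_at i : Pr P (fun w => X w && (alM (hap_at i w) == al1))
    = Pr P X * r al2 + Pr P (fun w => X w && (alA (hap_at i w) == al1)) * (r al1 - r al2).
  have XM_A' a : Pr P (fun w => X w && (alM (hap_at i w) == al1) && (alA (hap_at i w) == a))
      = Pr P (fun w => X w && (alA (hap_at i w) == a)) * r a.
    by rewrite -XM_A; apply: eq_Pr => w; rewrite andbAC.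
  have X_split := Pr_sum P (fun w => alA (hap_at i w)) X.
  rewrite sum_allele in X_split.
  rewrite [LHS](Pr_sum P (fun w => alA (hap_at i w))) sum_allele !XM_A' X_split; ring.
by rewrite !allele_freq_inE (M1_at true) (M1_at false); field.
Qed.

End GroupFrequencies.

Section Haplotypes.
Variables (R : numFieldType) (P : {ffun indiv -> R}).

Hypothesis hap_indep : forall h h' : hap,
  Pr P (fun w => (hap1 w == h) && (hap2 w == h'))
  = Pr P (fun w => hap1 w == h) * Pr P (fun w => hap2 w == h').
Hypothesis hap_exchangeable : forall h : hap,
  Pr P (fun w => hap1 w == h) = Pr P (fun w => hap2 w == h).

Lemma Pr_hap_at (i : bool) (S : pred hap) :
  Pr P (fun w => S (hap_at i w)) = Pr P (fun w => S (hap1 w)).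
Proof.
case: i => //; rewrite !(Pr_partitionT P _ S).
by apply: eq_bigr => h _; rewrite hap_exchangeable.
Qed.

Lemma Pr_hap_indep (S1 S2 : pred hap) :
  Pr P (fun w => S1 (hap1 w) && S2 (hap2 w))
  = Pr P (fun w => S1 (hap1 w)) * Pr P (fun w => S2 (hap2 w)).
Proof.
rewrite !Pr_partitionT big_distrlr /=.
under eq_bigr do under eq_bigr do rewrite -hap_indep.
rewrite pair_big_dep /= (Pr_partitionT P (fun w => (hap1 w, hap2 w)) (fun x => S1 x.1 && S2 x.2)).
by apply: eq_bigr => -[h h'] _; apply: eq_Pr => w; rewrite xpair_eqE.
Qed.

Lemma Pr_hap_at_indep (i : bool) (S1 S2 : pred hap) :
  Pr P (fun w => S1 (hap_at i w) && S2 (hap_at (~~ i) w))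
  = Pr P (fun w => S1 (hap1 w)) * Pr P (fun w => S2 (hap1 w)).
Proof.
case: i => /=.
  by rewrite Pr_hap_indep (Pr_hap_at false).
rewrite (eq_Pr P (F := fun w => S2 (hap1 w) && S1 (hap2 w))) => [|w]; last exact: andbC.
by rewrite Pr_hap_indep mulrC (Pr_hap_at false).
Qed.

Definition hapA_freq (a : allele) : R := Pr P (fun w => alA (hap1 w) == a).
Definition hapAM1_freq (a : allele) : R :=
  Pr P (fun w => (alA (hap1 w) == a) && (alM (hap1 w) == al1)).
Definition M1_given_A (a : allele) : R := hapAM1_freq a / hapA_freq a.

Lemma Pr_gA (i : bool) (ga : allele * allele) :
  Pr P (fun w => gA w == ga) = hapA_freq (geno_at i ga) * hapA_freq (geno_at (~~ i) ga).
Proof.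
rewrite (eq_Pr P (fun w => gA_eq_at i w ga)).
exact: (Pr_hap_at_indep i (fun h => alA h == _) (fun h => alA h == _)).
Qed.

Hypothesis hapA_freq_neq0 : forall a, hapA_freq a != 0.

Lemma Pr_gA_M1 (i : bool) (ga : allele * allele) :
  Pr P (fun w => (gA w == ga) && (alM (hap_at i w) == al1))
  = Pr P (fun w => gA w == ga) * M1_given_A (geno_at i ga).
Proof.
rewrite (Pr_gA i) (eq_Pr P (F := fun w =>
    ((alA (hap_at i w) == geno_at i ga) && (alM (hap_at i w) == al1))
    && (alA (hap_at (~~ i) w) == geno_at (~~ i) ga))) => [|w]; last first.
  by rewrite (gA_eq_at i) andbAC.
rewrite (Pr_hap_at_indep i (fun h => (alA h == _) && (alM h == al1)) (fun h => alA h == _)).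
have := hapA_freq_neq0 (geno_at i ga).
by rewrite /M1_given_A /hapAM1_freq /hapA_freq => ?; field.
Qed.

Lemma hap_cond_indep (X : pred indiv) :
  (forall ga gm,
     Pr P (fun w => X w && (gA w == ga) && (gM w == gm)) * Pr P (fun w => gA w == ga)
     = Pr P (fun w => X w && (gA w == ga)) * Pr P (fun w => (gA w == ga) && (gM w == gm))) ->
  forall i a,
    Pr P (fun w => X w && (alA (hap_at i w) == a) && (alM (hap_at i w) == al1))
    = Pr P (fun w => X w && (alA (hap_at i w) == a)) * M1_given_A a.
Proof.
move=> XM_A i a.
have M1_part E : Pr P (fun w => E w && (alM (hap_at i w) == al1))
    = \sum_(gm | geno_at i gm == al1) Pr P (fun w => E w && (gM w == gm)).
  by rewrite -Pr_partition; apply: eq_Pr => w; rewrite gM_at.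
have A_part E : Pr P (fun w => E w && (alA (hap_at i w) == a))
    = \sum_(ga | geno_at i ga == a) Pr P (fun w => E w && (gA w == ga)).
  by rewrite -Pr_partition; apply: eq_Pr => w; rewrite gA_at.
have XM_gA ga : Pr P (fun w => X w && (gA w == ga) && (alM (hap_at i w) == al1))
    = Pr P (fun w => X w && (gA w == ga)) * M1_given_A (geno_at i ga).
  have gA_neq0 : Pr P (fun w => gA w == ga) != 0 by rewrite (Pr_gA i) mulf_neq0.
  apply: (mulIf gA_neq0); rewrite mulrAC -mulrA -Pr_gA_M1 !M1_part.
  by rewrite mulr_suml mulr_sumr; apply: eq_bigr => gm _; exact: XM_A.
rewrite (eq_Pr P (F := fun w => X w && (alM (hap_at i w) == al1) && (alA (hap_at i w) == a)));
  last by move=> w; rewrite andbAC.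
rewrite !A_part mulr_suml; apply: eq_bigr => ga /eqP <-.
by rewrite -XM_gA; apply: eq_Pr => w; rewrite andbAC.
Qed.

Hypothesis Pr_total : Pr P predT = 1.

Lemma allele_freq_pop (loc : hap -> allele) (a : allele) :
  allele_freq_in P predT loc a = Pr P (fun w => loc (hap1 w) == a).
Proof.
rewrite allele_freq_inE Pr_total divr1 /=.
by rewrite (Pr_hap_at false (fun h => loc h == a)); field.
Qed.

Lemma hapA_freq_sum : hapA_freq al1 + hapA_freq al2 = 1.
Proof. by rewrite -Pr_total (Pr_sum P (fun w => alA (hap1 w))) sum_allele. Qed.

Lemma hapAM1_freq_sum :
  hapAM1_freq al1 + hapAM1_freq al2 = Pr P (fun w => alM (hap1 w) == al1).
Proof.
rewrite (Pr_sum P (fun w => alA (hap1 w))) sum_allele.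
by congr (_ + _); apply: eq_Pr => w; rewrite andbC.
Qed.

Lemma hapAM_freq_M1 (a : allele) : hapAM_freq P a al1 = hapAM1_freq a.
Proof.
rewrite /hapAM_freq (Pr_hap_at false (fun h => (alA h == a) && (alM h == al1))).
by rewrite /hapAM1_freq; field.
Qed.

Lemma M1_given_A_sub :
  M1_given_A al1 - M1_given_A al2
  = (hapAM_freq P al1 al1
     - allele_freq_in P predT alA al1 * allele_freq_in P predT alM al1)
    / (allele_freq_in P predT alA al1 * (1 - allele_freq_in P predT alA al1)).
Proof.
rewrite !allele_freq_pop -/(hapA_freq al1) hapAM_freq_M1 -hapAM1_freq_sum.
have fA2E : hapA_freq al2 = 1 - hapA_freq al1 by rewrite -hapA_freq_sum addrC addKr.
have := hapA_freq_neq0 al1; have := hapA_freq_neq0 al2.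
rewrite /M1_given_A fA2E; move: (hapA_freq al1) => f1 f2_neq0 f1_neq0.
by field; rewrite f1_neq0 f2_neq0.
Qed.

End Haplotypes.

Lemma div_sqrtM (R : rcfType) (a b d y : R) : 0 <= a -> 0 <= b ->
  d / a * y / Num.sqrt b = d / Num.sqrt (a * b) * (y / Num.sqrt a).
Proof.
move=> a_ge0 b_ge0.
have [->|a_neq0] := eqVneq a 0; first by rewrite mul0r sqrtr0 !(invr0, mulr0, mul0r).
have [->|b_neq0] := eqVneq b 0; first by rewrite mulr0 sqrtr0 !(invr0, mulr0, mul0r).
have sqrt_neq0 x : 0 <= x -> x != 0 -> Num.sqrt x != 0.
  by move=> x_ge0 x_neq0; rewrite sqrtr_eq0 -ltNge lt_def x_neq0.
rewrite sqrtrM // -{1}(sqr_sqrtr a_ge0).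
by field; rewrite !sqrt_neq0.
Qed.

Unset Implicit Arguments. Set Strict Implicit.

Theorem mainTheorem3 (R : rcfType) (P : {ffun indiv -> R}) :
  is_distr P ->
  (* Hardy-Weinberg equilibrium: the two haplotypes are independent *)
  (forall h h' : hap,
     Pr P (fun w => (hap1 w == h) && (hap2 w == h'))
     = Pr P (fun w => hap1 w == h) * Pr P (fun w => hap2 w == h')) ->
  (* both haplotypes are drawn from the same population haplotype distribution *)
  (forall h : hap, Pr P (fun w => hap1 w == h) = Pr P (fun w => hap2 w == h)) ->
  (* the marker is not causal: given (gA, gB), status is independent of gM *)
  (forall (s : bool) (ga gb gm : allele * allele),
     Pr P (fun w => (isCase w == s) && (gA w == ga) && (gB w == gb) && (gM w == gm))
       * Pr P (fun w => (gA w == ga) && (gB w == gb))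
     = Pr P (fun w => (isCase w == s) && (gA w == ga) && (gB w == gb))
       * Pr P (fun w => (gA w == ga) && (gB w == gb) && (gM w == gm))) ->
  (* linkage equilibrium of marker and second causal variant: given gA,
     gM is independent of gB *)
  (forall ga gb gm : allele * allele,
     Pr P (fun w => (gA w == ga) && (gB w == gb) && (gM w == gm))
       * Pr P (fun w => gA w == ga)
     = Pr P (fun w => (gA w == ga) && (gB w == gb))
       * Pr P (fun w => (gA w == ga) && (gM w == gm))) ->
  (* pi = P(case) in (0,1) *)
  0 < Pr P isCase < 1 ->
  (* pi_12 = pi_21 *)
  pi_geno P al1 al2 = pi_geno P al2 al1 ->
  let p1 := allele_freq_in P predT alA al1 in
  let q1 := allele_freq_in P predT alM al1 in
  let p2 := 1 - p1 in
  let q2 := 1 - q1 in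
  0 < p1 < 1 -> 0 < q1 < 1 ->
  let p1A := allele_freq_in P isCase alA al1 in
  let p1U := allele_freq_in P (predC isCase) alA al1 in
  let q1A := allele_freq_in P isCase alM al1 in
  let q1U := allele_freq_in P (predC isCase) alM al1 in
  let D11 := hapAM_freq P al1 al1 - p1 * q1 in
  let Delta := D11 / Num.sqrt (p1 * p2 * q1 * q2) in
  (q1U - q1A) / Num.sqrt (q1 * q2) = Delta * ((p1U - p1A) / Num.sqrt (p1 * p2)).
Proof.
move=> [P_ge0 Pr_total] hap_indep hap_exch not_causal marker_B_indep
  /andP[case_gt0 case_lt1] _ p1 q1 p2 q2 /andP[p1_gt0 p1_lt1] /andP[q1_gt0 q1_lt1]
  p1A p1U q1A q1U D11 Delta.
have fA_neq0 a : hapA_freq P a != 0.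
  have fA1 : hapA_freq P al1 = p1 by rewrite /p1 allele_freq_pop.
  have := hapA_freq_sum Pr_total.
  by case: (allele_cases a) => -> fA_sum; rewrite lt0r_neq0 //; lra.
pose r := M1_given_A P.
have freq_status s : Pr P (fun w => isCase w == s) != 0 ->
    allele_freq_in P (fun w => isCase w == s) alM al1
    = r al2 + (r al1 - r al2) * allele_freq_in P (fun w => isCase w == s) alA al1.
  apply: allele_freq_linear; apply: (hap_cond_indep hap_indep hap_exch fA_neq0).
  exact: (Pr_cond_indep_contraction P_ge0 (not_causal s) marker_B_indep).
have cases_E : isCase =1 (fun w => isCase w == true) by move=> w; rewrite eqb_id.
have controls_E : predC isCase =1 (fun w => isCase w == false).
  by move=> w; rewrite eqbF_neg.
have q1A_E : q1A = r al2 + (r al1 - r al2) * p1A.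
  rewrite /q1A /p1A !(eq_allele_freq_in _ _ _ cases_E) freq_status //.
  by rewrite -(eq_Pr P cases_E) lt0r_neq0.
have q1U_E : q1U = r al2 + (r al1 - r al2) * p1U.
  rewrite /q1U /p1U !(eq_allele_freq_in _ _ _ controls_E) freq_status //.
  by rewrite -(eq_Pr P controls_E) Pr_predC // lt0r_neq0 // subr_gt0.
have -> : q1U - q1A = D11 / (p1 * p2) * (p1U - p1A).
  by rewrite q1U_E q1A_E /D11 /p2 /p1 /q1 /r (M1_given_A_sub hap_exch fA_neq0 Pr_total); ring.
rewrite /Delta -[p1 * p2 * q1 * q2]mulrA.
by apply: div_sqrtM; rewrite mulr_ge0 // ?subr_ge0 ltW.
Qed.
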